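(* Let $A, C, D$ be binary random variables, with $A$ taking values $a,\overline{a}$, $C$ taking values $c,\overline{c}$, $D$ taking values $d,\overline{d}$, and let $Y$ be a real random variable with finite expectation. Suppose the joint distribution factorizes as \[ p(A,C,D,Y)=p(D)\,p(C\mid D)\,p(A\mid C)\,p(Y\mid A,C). \] Assume that $C$ and $D$ are dependent, and that every event $\{A=x, C=y, D=z\}$ has positive probability. For $x\in\{a,\overline{a}\}$ let $E[Y_x]=E[Y|x,c]p(c)+E[Y|x,\overline{c}]p(\overline{c})$, and let $S_x$ denote either $S_x=E[Y|x,d]p(d)+E[Y|x,\overline{d}]p(\overline{d})$ or $S_x=E[Y|x]$ (the claim holds for each of these two choices). Then: (i) if $E[Y\mid a,D]$ and $E[A\mid D]$ are both nondecreasing or both nonincreasing in $D$, then $S_a\ge E[Y_a]$; if they are one nondecreasing and the other nonincreasing in $D$, then $S_a\le E[Y_a]$; (ii) if $E[Y\mid \overline{a},D]$ and $E[A\mid D]$ are both nondecreasing or both nonincreasing in $D$, then $S_{\overline{a}}\le E[Y_{\overline{a}}]$; if they are one nondecreasing and the other nonincreasing in $D$, then $S_{\overline{a}}\ge E[Y_{\overline{a}}]$.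
   Context: For $x\in\{a,\overline{a}\}$, $E[Y\mid x,D]$ is nondecreasing in $D$ if $E[Y\mid x,d]\ge E[Y\mid x,\overline{d}]$ and nonincreasing in $D$ if $E[Y\mid x,d]\le E[Y\mid x,\overline{d}]$. With $A$ coded as $a=1$, $\overline{a}=0$, $E[A\mid D]=p(a\mid D)$ is nondecreasing in $D$ if $p(a\mid d)\ge p(a\mid\overline{d})$ and nonincreasing if $p(a\mid d)\le p(a\mid\overline{d})$. $E[Y_x]$ is the causal effect on $Y$ of setting $A=x$ (expressed by the adjustment formula above). *)

From mathcomp Require Import all_boot all_order all_algebra.
From mathcomp Require Import all_classical all_reals all_analysis.
Set Implicit Arguments. Unset Strict Implicit. Unset Printing Implicit Defensive.
Import Order.TTheory GRing.Theory Num.Theory.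
Local Open Scope classical_set_scope.
Local Open Scope ring_scope.

(* Conventions: the binary variables A, C, D take values in bool, with
   a = true, abar = false; c = true, cbar = false; d = true, dbar = false. *)

Section Defs.
Context {d : measure_display} {T : measurableType d} {R : realType}
  (P : probability T R).

Definition ev (X : {RV P >-> bool}) (x : bool) : set T := X @^-1` [set x].

Definition pr (F : set T) : R := fine (P F).

Definition condE (Y : {RV P >-> R}) (F : set T) : R :=
  Rintegral P F (fun w => Y w) / pr F.

(* The joint law factorizes as p(D) p(C|D) p(A|C) p(Y|A,C), i.e. (by the chain
   rule p(D) p(C|D) p(A|C,D) p(Y|A,C,D), all conditioning events having positive
   probability) p(A|C,D) = p(A|C) and p(Y|A,C,D) = p(Y|A,C), the latter as
   conditional distributions of Y (for every Borel set B). *)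
Definition factorizes (A C D : {RV P >-> bool}) (Y : {RV P >-> R}) : Prop :=
  (forall x y z : bool,
     pr (ev A x `&` ev C y `&` ev D z) * pr (ev C y)
     = pr (ev A x `&` ev C y) * pr (ev C y `&` ev D z)) /\
  (forall (x y z : bool) (B : set R), measurable B ->
     pr (Y @^-1` B `&` (ev A x `&` ev C y `&` ev D z)) * pr (ev A x `&` ev C y)
     = pr (Y @^-1` B `&` (ev A x `&` ev C y)) * pr (ev A x `&` ev C y `&` ev D z)).

Definition dependent (C D : {RV P >-> bool}) : Prop :=
  ~ (forall y z : bool, pr (ev C y `&` ev D z) = pr (ev C y) * pr (ev D z)).

Definition EY_nondecr (Y : {RV P >-> R}) (A D : {RV P >-> bool}) (x : bool) :=
  condE Y (ev A x `&` ev D true) >= condE Y (ev A x `&` ev D false).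
Definition EY_nonincr (Y : {RV P >-> R}) (A D : {RV P >-> bool}) (x : bool) :=
  condE Y (ev A x `&` ev D true) <= condE Y (ev A x `&` ev D false).

(* E[A | D = z] = p(a | z) *)
Definition pA_given (A D : {RV P >-> bool}) (z : bool) : R :=
  pr (ev A true `&` ev D z) / pr (ev D z).
Definition EA_nondecr (A D : {RV P >-> bool}) := pA_given A D true >= pA_given A D false.
Definition EA_nonincr (A D : {RV P >-> bool}) := pA_given A D true <= pA_given A D false.

Definition EYdo (Y : {RV P >-> R}) (A C : {RV P >-> bool}) (x : bool) : R :=
  condE Y (ev A x `&` ev C true) * pr (ev C true)
  + condE Y (ev A x `&` ev C false) * pr (ev C false).

Definition S_adjD (Y : {RV P >-> R}) (A D : {RV P >-> bool}) (x : bool) : R :=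
  condE Y (ev A x `&` ev D true) * pr (ev D true)
  + condE Y (ev A x `&` ev D false) * pr (ev D false).

Definition S_crude (Y : {RV P >-> R}) (A : {RV P >-> bool}) (x : bool) : R :=
  condE Y (ev A x).

Definition cor4_claims (Y : {RV P >-> R}) (A C D : {RV P >-> bool}) (S : bool -> R) : Prop :=
  (((EY_nondecr Y A D true /\ EA_nondecr A D) \/ (EY_nonincr Y A D true /\ EA_nonincr A D))
     -> S true >= EYdo Y A C true) /\
  (((EY_nondecr Y A D true /\ EA_nonincr A D) \/ (EY_nonincr Y A D true /\ EA_nondecr A D))
     -> S true <= EYdo Y A C true) /\
  (((EY_nondecr Y A D false /\ EA_nondecr A D) \/ (EY_nonincr Y A D false /\ EA_nonincr A D))
     -> S false <= EYdo Y A C false) /\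
  (((EY_nondecr Y A D false /\ EA_nonincr A D) \/ (EY_nonincr Y A D false /\ EA_nondecr A D))
     -> S false >= EYdo Y A C false).

End Defs.

(* Write u for the joint law of (C, D), rho x c = p(A = x | C = c) and
   m x c = E[Y | A = x, C = c].  The factorization turns E[Y | x, D = z] into the
   mean of m x for the weights rho x c * u c z, p(a | z) into the mean of rho a
   for the weights u c z, E[Y | x] into the mean of m x for rho x c * p(c), and
   E[Y_x] into the mean of m x for p(c).  For positive weights w, v on a
   two-point set, mean_w m - mean_v m has the sign of
   (m c - m cbar) (w c v cbar - w cbar v c).  Hence E[Y | x, d] - E[Y | x, dbar]
   has the sign of (m x c - m x cbar) det u, p(a | d) - p(a | dbar) that of
   (rho a c - rho a cbar) det u, and S_x - E[Y_x] that of
   (m x c - m x cbar) (rho x c - rho x cbar).  Dependence of C and D means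
   det u <> 0, so the product of the two trends has the sign of S_a - E[Y_a];
   for x = abar, rho abar = 1 - rho a reverses it. *)

From mathcomp Require Import all_boot all_order all_algebra.
From mathcomp Require Import all_classical all_reals all_analysis.
From mathcomp Require Import measurable_realfun ring.
Set Implicit Arguments.
Unset Strict Implicit.
Unset Printing Implicit Defensive.
Import Order.TTheory GRing.Theory Num.Theory.
Local Open Scope classical_set_scope.
Local Open Scope ring_scope.

Section binary_mean.
Variable R : realFieldType.
Implicit Types (w v m : bool -> R) (u : bool -> bool -> R).

Definition wmean w m : R := (w true * m true + w false * m false) / (w true + w false).

Lemma wmean_sub w v m : w true + w false != 0 -> v true + v false != 0 ->
  wmean w m - wmean v m
  = (m true - m false) * (w true * v false - w false * v true)
    / ((w true + w false) * (v true + v false)).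
Proof. by move=> w0 v0; rewrite /wmean; field; rewrite w0 v0. Qed.

Lemma sgr_wmean_sub w v m : (forall y, 0 < w y) -> (forall y, 0 < v y) ->
  Num.sg (wmean w m - wmean v m)
  = Num.sg (m true - m false) * Num.sg (w true * v false - w false * v true).
Proof.
move=> w_gt0 v_gt0.
have sum_gt0 (f : bool -> R) : (forall y, 0 < f y) -> 0 < f true + f false.
  by move=> f_gt0; exact: addr_gt0.
rewrite wmean_sub ?gt_eqF ?sum_gt0 // -mulrA sgrM sgrM sgrV.
by rewrite [Num.sg (_ * _)]gtr0_sg ?mulr1 // mulr_gt0 ?sum_gt0.
Qed.

Definition det2 u : R := u true true * u false false - u true false * u false true.

Lemma cell_sub_marginals u y z :
  u true true + u true false + u false true + u false false = 1 ->
  u y z - (u y true + u y false) * (u true z + u false z)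
  = (if y == z then det2 u else - det2 u).
Proof.
move=> u_sum1; have u00 : u false false = 1 - u true true - u true false - u false true.
  by rewrite -u_sum1; ring.
by rewrite /det2; case: y; case: z; rewrite /= u00; ring.
Qed.

Lemma indep_of_det2_eq0 u :
  u true true + u true false + u false true + u false false = 1 -> det2 u = 0 ->
  forall y z, u y z = (u y true + u y false) * (u true z + u false z).
Proof.
move=> u_sum1 det0 y z; apply/eqP; rewrite -subr_eq0 cell_sub_marginals //.
by rewrite det0 oppr0 if_same.
Qed.

Section confounded_table.
Variables (u : bool -> bool -> R) (rho m : bool -> R).
Hypotheses (u_gt0 : forall y z, 0 < u y z) (rho_gt0 : forall y, 0 < rho y).

Let pC y := u y true + u y false.
Let pD z := u true z + u false z.

Lemma sgr_wmean_col_sub :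
  Num.sg (wmean (u ^~ true) m - wmean (u ^~ false) m)
  = Num.sg (m true - m false) * Num.sg (det2 u).
Proof. by rewrite sgr_wmean_sub // [u false true * _]mulrC. Qed.

Lemma sgr_wmean_weighted_col_sub :
  Num.sg (wmean (fun y => rho y * u y true) m - wmean (fun y => rho y * u y false) m)
  = Num.sg (m true - m false) * Num.sg (det2 u).
Proof.
have w_gt0 z y : 0 < rho y * u y z by exact: mulr_gt0.
rewrite sgr_wmean_sub //.
have -> : rho true * u true true * (rho false * u false false)
          - rho false * u false true * (rho true * u true false)
          = rho true * rho false * det2 u by rewrite /det2; ring.
by rewrite sgrM [Num.sg (_ * _)]gtr0_sg ?mul1r // mulr_gt0.
Qed.

Lemma sgr_adjusted_bias :
  Num.sg (wmean (fun y => rho y * u y true) m * pD true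
          + wmean (fun y => rho y * u y false) m * pD false
          - (m true * pC true + m false * pC false))
  = Num.sg (m true - m false) * Num.sg (rho true - rho false).
Proof.
pose W z := rho true * u true z + rho false * u false z.
have W_gt0 z : 0 < W z by apply: addr_gt0; apply: mulr_gt0.
(* Within each stratum z of D, reweighting u(., z) by rho shifts the mean of m by
   (m true - m false) (rho true - rho false) times a positive factor. *)
have -> : wmean (fun y => rho y * u y true) m * pD true
          + wmean (fun y => rho y * u y false) m * pD false
          - (m true * pC true + m false * pC false)
          = (m true - m false) * (rho true - rho false)
            * (u true true * u false true / W true
               + u true false * u false false / W false).
  rewrite /wmean /pC /pD /W; field.
  by apply/andP; split; exact: lt0r_neq0 (W_gt0 _).
rewrite sgrM [Num.sg (_ + _)]gtr0_sg ?mulr1 ?sgrM //.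
by apply: addr_gt0; apply: divr_gt0 => //; apply: mulr_gt0.
Qed.

End confounded_table.

Lemma sgr_crude_bias (w rho m : bool -> R) :
  (forall y, 0 < w y) -> (forall y, 0 < rho y) -> w true + w false = 1 ->
  Num.sg (wmean (fun y => rho y * w y) m - (m true * w true + m false * w false))
  = Num.sg (m true - m false) * Num.sg (rho true - rho false).
Proof.
move=> w_gt0 rho_gt0 w_sum1.
have -> : m true * w true + m false * w false = wmean w m.
  by rewrite /wmean w_sum1 divr1 !(mulrC (m _)).
have rw_gt0 y : 0 < rho y * w y by exact: mulr_gt0.
rewrite sgr_wmean_sub //.
have -> : rho true * w true * w false - rho false * w false * w true
          = (rho true - rho false) * (w true * w false) by ring.
by rewrite sgrM [Num.sg (_ * _)]gtr0_sg ?mulr1 // mulr_gt0.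
Qed.

Lemma sgr_prod_ge0 (s a b : R) : Num.sg s = Num.sg (a * b) ->
  (0 <= a /\ 0 <= b) \/ (a <= 0 /\ b <= 0) -> 0 <= s.
Proof.
by move=> sg_s ab; rewrite -sgr_ge0 sg_s sgr_ge0; case: ab => -[];
  [exact: mulr_ge0 | exact: mulr_le0].
Qed.

Lemma sgr_prod_le0 (s a b : R) : Num.sg s = Num.sg (a * b) ->
  (0 <= a /\ b <= 0) \/ (a <= 0 /\ 0 <= b) -> s <= 0.
Proof.
by move=> sg_s ab; rewrite -sgr_le0 sg_s sgr_le0; case: ab => -[];
  [exact: mulr_ge0_le0 | exact: mulr_le0_ge0].
Qed.

End binary_mean.

Section restricted_law.
Context {d : measure_display} {T : measurableType d} {R : realType}.
Variable mu : {measure set T -> \bar R}.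

Lemma integral_mrestrT {F : set T} (mF : measurable F) (f : T -> \bar R) :
  measurable_fun setT f ->
  (\int[mrestr mu mF]_(x in setT) f x = \int[mu]_(x in F) f x)%E.
Proof.
move=> mf; rewrite -(setUv F) integral_setU //; last 3 first.
- exact: measurableC.
- by rewrite setUv.
- by rewrite /disj_set setICr.
rewrite (eq_measure_integral mu); last first.
  by move=> A mA AF; change (mu (A `&` F) = mu A); rewrite setIidl.
rewrite [X in (_ + X)%E](eq_measure_integral mzero); last first.
  move=> A mA AF; change (mu (A `&` F) = 0%E).
  suff -> : A `&` F = set0 by rewrite measure0.
  by apply/seteqP; split => // x [/AF].
by rewrite integral_measure_zero adde0.
Qed.

Lemma ge0_integral_scaled_law (k : {nonneg R}) {F : set T} (mF : measurable F)
    (X : {mfun T >-> R}) (h : R -> \bar R) :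
  measurable_fun setT h -> (forall r, 0 <= h r)%E ->
  (\int[pushforward (mscale k (mrestr mu mF)) X]_(r in setT) h r
   = k%:num%:E * \int[mu]_(x in F) (h \o X) x)%E.
Proof.
move=> mh h_ge0; have mhX : measurable_fun setT (h \o X).
  exact/measurableT_comp/measurable_funPT.
rewrite ge0_integral_pushforward // preimage_setT ge0_integral_mscale //; last first.
  by move=> x _; exact: h_ge0.
by congr (_ * _)%E; exact: integral_mrestrT.
Qed.

End restricted_law.

Section conditional_expectation.
Context {d : measure_display} {T : measurableType d} {R : realType}.
Variable P : probability T R.

Lemma prE {F : set T} : measurable F -> P F = (pr P F)%:E.
Proof. by move=> mF; rewrite /pr fineK // fin_num_measure. Qed.

Lemma pr_ge0 {F : set T} : measurable F -> 0 <= pr P F.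
Proof. by move=> mF; rewrite /pr fine_ge0. Qed.

Definition same_cond_law (X : T -> R) (F1 F2 : set T) :=
  forall B, measurable B ->
    pr P (X @^-1` B `&` F1) * pr P F2 = pr P (X @^-1` B `&` F2) * pr P F1.

Lemma ge0_integral_eq_of_law (X : {mfun T >-> R}) {F1 F2 : set T}
    {h : R -> \bar R} :
  measurable F1 -> measurable F2 -> same_cond_law X F1 F2 ->
  measurable_fun setT h -> (forall r, 0 <= h r)%E ->
  ((pr P F2)%:E * \int[P]_(x in F1) (h \o X) x
   = (pr P F1)%:E * \int[P]_(x in F2) (h \o X) x)%E.
Proof.
move=> mF1 mF2 law mh h_ge0.
pose k1 : {nonneg R} := NngNum (pr_ge0 mF1).
pose k2 : {nonneg R} := NngNum (pr_ge0 mF2).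
rewrite -(ge0_integral_scaled_law P k2 mF1) // -(ge0_integral_scaled_law P k1 mF2) //.
apply: eq_measure_integral => B mB _.
have mXB F : measurable F -> measurable (X @^-1` B `&` F).
  move=> mF; apply: measurableI => //.
  by rewrite -[_ @^-1` _]setTI; exact: measurable_funP.
change ((pr P F2)%:E * P (X @^-1` B `&` F1) = (pr P F1)%:E * P (X @^-1` B `&` F2))%E.
rewrite (prE (mXB _ mF1)) (prE (mXB _ mF2)) -!EFinM.
by rewrite mulrC law // mulrC.
Qed.

Lemma Rintegral_mul_pr_eq_of_law (X : {mfun T >-> R}) (F1 F2 : set T) :
  measurable F1 -> measurable F2 -> P.-integrable setT (EFin \o X) ->
  same_cond_law X F1 F2 ->
  Rintegral P F1 X * pr P F2 = Rintegral P F2 X * pr P F1.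
Proof.
move=> mF1 mF2 iX law.
have iF F : measurable F -> P.-integrable F (EFin \o X).
  by move=> mF; exact: integrableS iX.
have mEFin : measurable_fun setT (@EFin R) by exact/measurable_EFinP.
have pos : ((pr P F2)%:E * \int[P]_(x in F1) (EFin \o X)^\+ x
             = (pr P F1)%:E * \int[P]_(x in F2) (EFin \o X)^\+ x)%E.
  rewrite (funepos_comp EFin X).
  exact: ge0_integral_eq_of_law (measurable_funepos mEFin) (funepos_ge0 _).
have neg : ((pr P F2)%:E * \int[P]_(x in F1) (EFin \o X)^\- x
             = (pr P F1)%:E * \int[P]_(x in F2) (EFin \o X)^\- x)%E.
  rewrite (funeneg_comp EFin X).
  exact: ge0_integral_eq_of_law (measurable_funeneg mEFin) (funeneg_ge0 _).
apply: EFin_inj; rewrite !EFinM /Rintegral.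
rewrite (fineK (integrable_fin_num mF1 (iF _ mF1))).
rewrite (fineK (integrable_fin_num mF2 (iF _ mF2))).
rewrite (integralE P F1) (integralE P F2) muleC [RHS]muleC.
have def_sub F : measurable F ->
    (\int[P]_(x in F) (EFin \o X)^\+ x +? - \int[P]_(x in F) (EFin \o X)^\- x)%E.
  by move=> mF; apply: fin_num_adde_defl; rewrite fin_numN integrable_neg_fin_num ?iF.
rewrite muleBr ?def_sub // [RHS]muleBr ?def_sub //.
by congr (_ - _)%E; [exact: pos | exact: neg].
Qed.

Lemma condE_eq_of_law (Y : {RV P >-> R}) (F1 F2 : set T) :
  measurable F1 -> measurable F2 -> P.-integrable setT (EFin \o Y) ->
  same_cond_law Y F1 F2 -> pr P F1 != 0 -> pr P F2 != 0 ->
  condE Y F1 = condE Y F2.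
Proof.
move=> mF1 mF2 iY law pF1 pF2; apply/eqP; rewrite /condE eqr_div //.
by apply/eqP; exact: Rintegral_mul_pr_eq_of_law.
Qed.

Lemma measurable_ev (X : {RV P >-> bool}) (x : bool) : measurable (ev X x).
Proof. by rewrite /ev -[X @^-1` _]setTI; exact: measurable_funP. Qed.

Lemma ev_false (X : {RV P >-> bool}) : ev X false = ~` ev X true.
Proof. by apply/seteqP; split => w; rewrite /ev /=; case: (X w). Qed.

Lemma setI_ev_split (X : {RV P >-> bool}) (F : set T) :
  F = (F `&` ev X true) `|` (F `&` ev X false).
Proof. by rewrite ev_false -setIUr setUv setIT. Qed.

Lemma setI_ev_disj (X : {RV P >-> bool}) (F : set T) :
  (F `&` ev X true) `&` (F `&` ev X false) = set0.
Proof. by rewrite ev_false setIACA setICr setI0. Qed.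

Lemma pr_ev_split (X : {RV P >-> bool}) (F : set T) : measurable F ->
  pr P F = pr P (F `&` ev X true) + pr P (F `&` ev X false).
Proof.
move=> mF; have mFX x : measurable (F `&` ev X x) by exact/measurableI/measurable_ev.
apply: EFin_inj; rewrite EFinD -!prE // -measureU ?setI_ev_disj //.
by rewrite -setI_ev_split.
Qed.

Lemma Rintegral_ev_split (Y : {RV P >-> R}) (X : {RV P >-> bool}) (F : set T) :
  P.-integrable setT (EFin \o Y) -> measurable F ->
  Rintegral P F Y = Rintegral P (F `&` ev X true) Y + Rintegral P (F `&` ev X false) Y.
Proof.
move=> iY mF; have mFX x : measurable (F `&` ev X x) by exact/measurableI/measurable_ev.
rewrite {1}(setI_ev_split X F) Rintegral_setU // -?setI_ev_split.
  exact: integrableS iY.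
by rewrite /disj_set setI_ev_disj.
Qed.

Lemma condE_ev_split (Y : {RV P >-> R}) (X : {RV P >-> bool}) (F : set T) :
  P.-integrable setT (EFin \o Y) -> measurable F ->
  (forall x, pr P (F `&` ev X x) != 0) ->
  condE Y F = wmean (fun x => pr P (F `&` ev X x)) (fun x => condE Y (F `&` ev X x)).
Proof.
move=> iY mF pFX; rewrite /condE /wmean -pr_ev_split // (Rintegral_ev_split X) //.
by rewrite !(mulrC (pr P _)) !divfK.
Qed.

End conditional_expectation.

Section confounded_model.
Context {d : measure_display} {T : measurableType d} {R : realType}.
Variables (P : probability T R) (A C D : {RV P >-> bool}) (Y : {RV P >-> R}).
Hypotheses (iY : P.-integrable setT (EFin \o Y)) (fac : factorizes A C D Y)
  (dep : dependent C D) (pos : forall x y z, (0 < P (ev A x `&` ev C y `&` ev D z))%E).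

Let u y z := pr P (ev C y `&` ev D z).
Let rho x y := pr P (ev A x `&` ev C y) / pr P (ev C y).
Let m x y := condE Y (ev A x `&` ev C y).

Let mAC x y : measurable (ev A x `&` ev C y).
Proof. by apply: measurableI; exact: measurable_ev. Qed.
Let mAD x z : measurable (ev A x `&` ev D z).
Proof. by apply: measurableI; exact: measurable_ev. Qed.
Let mCD y z : measurable (ev C y `&` ev D z).
Proof. by apply: measurableI; exact: measurable_ev. Qed.
Let mcell x y z : measurable (ev A x `&` ev C y `&` ev D z).
Proof. by apply: measurableI; [exact: mAC | exact: measurable_ev]. Qed.

Lemma pr_cell_gt0 x y z : 0 < pr P (ev A x `&` ev C y `&` ev D z).
Proof. by rewrite -lte_fin -prE. Qed.

Lemma pr_CD_gt0 y z : 0 < u y z.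
Proof.
rewrite /u (pr_ev_split A) //.
by rewrite !(setIC (_ `&` _) (ev A _)) !setIA addr_gt0 ?pr_cell_gt0.
Qed.

Lemma pr_C_split y : pr P (ev C y) = u y true + u y false.
Proof. exact/pr_ev_split/measurable_ev. Qed.

Lemma pr_D_split z : pr P (ev D z) = u true z + u false z.
Proof.
by rewrite (pr_ev_split C (measurable_ev D z)) setIC [X in _ + pr P X]setIC.
Qed.

Lemma pr_C_gt0 y : 0 < pr P (ev C y).
Proof. by rewrite pr_C_split addr_gt0 ?pr_CD_gt0. Qed.

Lemma pr_C_sum1 : pr P (ev C true) + pr P (ev C false) = 1.
Proof.
have -> : 1 = pr P setT by rewrite /pr probability_setT.
by rewrite (pr_ev_split C measurableT) !setTI.
Qed.

Lemma pr_AC_gt0 x y : 0 < pr P (ev A x `&` ev C y).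
Proof. by rewrite (pr_ev_split D) // addr_gt0 ?pr_cell_gt0. Qed.

Lemma rho_gt0 x y : 0 < rho x y.
Proof. by rewrite divr_gt0 ?pr_C_gt0 ?pr_AC_gt0. Qed.

Lemma rho_false y : rho false y = 1 - rho true y.
Proof.
have pA0 : pr P (ev A false `&` ev C y) = pr P (ev C y) - pr P (ev A true `&` ev C y).
  by rewrite (pr_ev_split A (measurable_ev C y)) !(setIC (ev C y) (ev A _)) addrC addKr.
by rewrite /rho pA0 mulrBl divff // lt0r_neq0 ?pr_C_gt0.
Qed.

Lemma rho_false_sub :
  rho false true - rho false false = - (rho true true - rho true false).
Proof. by rewrite !rho_false; ring. Qed.

Lemma pr_cell_factor x y z : pr P (ev A x `&` ev C y `&` ev D z) = rho x y * u y z.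
Proof.
have pC_neq0 := lt0r_neq0 (pr_C_gt0 y).
by apply: (mulIf pC_neq0); rewrite fac.1 /rho mulrAC divfK.
Qed.

Lemma condE_cell x y z : condE Y (ev A x `&` ev C y `&` ev D z) = m x y.
Proof.
apply: condE_eq_of_law; rewrite ?lt0r_neq0 ?pr_cell_gt0 //.
- exact: fac.2.
- exact: pr_AC_gt0.
Qed.

Lemma condE_AD x z :
  condE Y (ev A x `&` ev D z) = wmean (fun y => rho x y * u y z) (m x).
Proof.
rewrite (condE_ev_split (X := C)) //; last first.
  by move=> y; rewrite setIAC lt0r_neq0 ?pr_cell_gt0.
by congr wmean; apply/funext => y; rewrite setIAC ?pr_cell_factor ?condE_cell.
Qed.

Lemma condE_A x :
  condE Y (ev A x) = wmean (fun y => rho x y * pr P (ev C y)) (m x).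
Proof.
rewrite (condE_ev_split (X := C) iY (measurable_ev A x)); last first.
  by move=> y; rewrite lt0r_neq0 ?pr_AC_gt0.
by congr wmean; apply/funext => y; rewrite /rho divfK // lt0r_neq0 ?pr_C_gt0.
Qed.

Lemma pA_given_wmean z : pA_given A D z = wmean (u ^~ z) (rho true).
Proof.
rewrite /pA_given /wmean -pr_D_split (pr_ev_split C (mAD true z)).
by rewrite setIAC [X in _ + pr P X]setIAC !pr_cell_factor !(mulrC (u _ z)).
Qed.

Lemma det2_neq0 : det2 u != 0.
Proof.
have u_sum1 : u true true + u true false + u false true + u false false = 1.
  by rewrite -pr_C_sum1 !pr_C_split addrA.
apply/eqP => det0; apply: dep => y z.
by rewrite pr_C_split pr_D_split; exact: indep_of_det2_eq0.
Qed.

Lemma sgr_condE_AD_sub x :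
  Num.sg (condE Y (ev A x `&` ev D true) - condE Y (ev A x `&` ev D false))
  = Num.sg (m x true - m x false) * Num.sg (det2 u).
Proof.
by rewrite !condE_AD; apply: sgr_wmean_weighted_col_sub => *; rewrite ?pr_CD_gt0 ?rho_gt0.
Qed.

Lemma sgr_pA_given_sub :
  Num.sg (pA_given A D true - pA_given A D false)
  = Num.sg (rho true true - rho true false) * Num.sg (det2 u).
Proof. by rewrite !pA_given_wmean; apply: sgr_wmean_col_sub => *; rewrite pr_CD_gt0. Qed.

Lemma sgr_S_adjD_bias x :
  Num.sg (S_adjD Y A D x - EYdo Y A C x)
  = Num.sg (m x true - m x false) * Num.sg (rho x true - rho x false).
Proof.
rewrite /S_adjD /EYdo !condE_AD !pr_D_split !pr_C_split.
by apply: sgr_adjusted_bias => *; rewrite ?pr_CD_gt0 ?rho_gt0.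
Qed.

Lemma sgr_S_crude_bias x :
  Num.sg (S_crude Y A x - EYdo Y A C x)
  = Num.sg (m x true - m x false) * Num.sg (rho x true - rho x false).
Proof.
by rewrite /S_crude /EYdo condE_A; apply: sgr_crude_bias pr_C_sum1 => *;
  rewrite ?pr_C_gt0 ?rho_gt0.
Qed.

Lemma sgr_trends_prod x :
  Num.sg ((condE Y (ev A x `&` ev D true) - condE Y (ev A x `&` ev D false))
          * (pA_given A D true - pA_given A D false))
  = Num.sg (m x true - m x false) * Num.sg (rho true true - rho true false).
Proof.
have det_sq : Num.sg (det2 u) * Num.sg (det2 u) = 1.
  by rewrite -expr2 sqr_sg det2_neq0.
by rewrite sgrM sgr_condE_AD_sub sgr_pA_given_sub mulrACA det_sq mulr1.
Qed.

Lemma cor4_claims_of_bias (S : bool -> R) :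
  (forall x, Num.sg (S x - EYdo Y A C x)
             = Num.sg (m x true - m x false) * Num.sg (rho x true - rho x false)) ->
  cor4_claims Y A C D S.
Proof.
move=> bias.
pose dE x := condE Y (ev A x `&` ev D true) - condE Y (ev A x `&` ev D false).
pose dpA := pA_given A D true - pA_given A D false.
have sgr_true : Num.sg (S true - EYdo Y A C true) = Num.sg (dE true * dpA).
  by rewrite bias sgr_trends_prod.
have sgr_false : Num.sg (EYdo Y A C false - S false) = Num.sg (dE false * dpA).
  by rewrite -opprB sgrN bias sgr_trends_prod rho_false_sub sgrN mulrN opprK.
have co x s : Num.sg s = Num.sg (dE x * dpA) ->
    (EY_nondecr Y A D x /\ EA_nondecr A D) \/ (EY_nonincr Y A D x /\ EA_nonincr A D) ->
    0 <= s.
  by move=> sg_s h; apply: (sgr_prod_ge0 sg_s); rewrite !subr_ge0 !subr_le0.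
have anti x s : Num.sg s = Num.sg (dE x * dpA) ->
    (EY_nondecr Y A D x /\ EA_nonincr A D) \/ (EY_nonincr Y A D x /\ EA_nondecr A D) ->
    s <= 0.
  by move=> sg_s h; apply: (sgr_prod_le0 sg_s); rewrite !subr_ge0 !subr_le0.
split; [|split; [|split]] => h.
- by rewrite -subr_ge0; exact: co sgr_true h.
- by rewrite -subr_le0; exact: anti sgr_true h.
- by rewrite -subr_ge0; exact: co sgr_false h.
- by rewrite -subr_le0; exact: anti sgr_false h.
Qed.

End confounded_model.

Theorem corollary4 (d : measure_display) (T : measurableType d) (R : realType)
  (P : probability T R) (A C D : {RV P >-> bool}) (Y : {RV P >-> R}) :
  P.-integrable setT (EFin \o Y) ->
  factorizes A C D Y ->
  dependent C D ->
  (forall x y z : bool, (0 < P (ev A x `&` ev C y `&` ev D z))%E) ->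
  cor4_claims Y A C D (S_adjD Y A D) /\ cor4_claims Y A C D (S_crude Y A).
Proof.
move=> iY fac dep pos; split; apply: cor4_claims_of_bias => // x.
- exact: sgr_S_adjD_bias.
- exact: sgr_S_crude_bias.
Qed.
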